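(* Let $k>1$, $F=F(a_1,\dots,a_k)$, let $0<\lambda<1/3$ and let $\tau$ be a nontrivial relabeling automorphism of $F$. Let $S'(\lambda,\tau)$ be the set of all cyclically reduced words $x$ such that $x$ and some cyclic permutation of $\tau(x^{-1})$ have a common initial segment of length $\ge\lambda|x|$. Then $S'(\lambda,\tau)$ is exponentially $CR$-negligible.
   Context: $A_{2k}=\{a_1^{\pm1},\dots,a_k^{\pm1}\}$; $F$ is identified with the set of freely reduced words over $A_{2k}$, and $CR\subseteq F$ is the set of cyclically reduced words. An automorphism $\tau$ of $F$ is a relabeling automorphism if its restriction to $A_{2k}$ is a permutation of $A_{2k}$. For $S\subseteq F$, $\rho(n,S)$ is the number of $x\in S$ with $|x|\le n$. For $S\subseteq Q\subseteq F$, $S$ is exponentially $Q$-generic if there are $C>0$ and $0<\sigma<1$ with $|\rho(n,S)/\rho(n,Q)-1|\le C\sigma^n$ for all $n$; $S$ is exponentially $Q$-negligible if $Q\setminus S$ is exponentially $Q$-generic. *)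

From HB Require Import structures.
From mathcomp Require Import all_boot all_order all_algebra.
From mathcomp Require Import fingroup perm.
From Stdlib Require Rdefinitions.
Notation R := Rdefinitions.R.
From mathcomp Require Import Rstruct.
Set Implicit Arguments. Unset Strict Implicit. Unset Printing Implicit Defensive.
Import Order.TTheory GRing.Theory Num.Theory.
Local Open Scope ring_scope.

(* Letters of A_{2k}: (i, false) = a_(i+1), (i, true) = a_(i+1)^{-1}. *)
Definition letter (k : nat) : finType := ('I_k * bool)%type.
Definition linv k (a : letter k) : letter k := (a.1, ~~ a.2).

(* Words over A_{2k}; elements of F are the freely reduced words. *)
Definition word k := seq (letter k).
Definition winv k (w : word k) : word k := rev (map (@linv k) w).

Definition freely_reduced k (w : word k) : bool :=
  sorted (fun a b => b != linv a) w.

Definition cyc_reduced k (w : word k) : bool :=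
  freely_reduced w &&
  (if w is a :: _ then last a w != linv a else true).

(* A relabeling automorphism is determined by its restriction to A_{2k},
   a permutation p of the letters compatible with inversion. *)
Definition relabeling k (p : {perm letter k}) : Prop :=
  forall a, p (linv a) = linv (p a).

Definition apply_relab k (p : {perm letter k}) (w : word k) : word k := map p w.

Definition rho k (n : nat) (S : pred (word k)) : nat :=
  \sum_(l < n.+1) #|[set t : l.-tuple (letter k) | S (tval t)]|.

Definition exp_generic k (S Q : pred (word k)) : Prop :=
  exists C : R, exists sigma : R, 0 < C /\ 0 < sigma < 1 /\
    forall n : nat,
      `| (rho n S)%:R / (rho n Q)%:R - 1 | <= C * sigma ^+ n.

Definition exp_negligible k (S Q : pred (word k)) : Prop :=
  exp_generic [pred x | Q x && ~~ S x] Q.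

Definition Sprime k (lam : R) (p : {perm letter k}) : pred (word k) :=
  [pred x | cyc_reduced x &&
     [exists i : 'I_(size x).+1, [exists m : 'I_(size x).+1,
        (lam * (size x)%:R <= (m : nat)%:R) &&
        (take m x == take m (rot i (apply_relab p (winv x))))]]].

From HB Require Import structures.
From mathcomp Require Import all_boot all_order all_algebra.
From mathcomp Require Import fingroup perm.
From mathcomp Require Import Rstruct.
From mathcomp Require Import zify ring lra.
Import Order.TTheory GRing.Theory Num.Theory.
Set Implicit Arguments. Unset Strict Implicit. Unset Printing Implicit Defensive.

(* If x of length l lies in S'(lam, p), then on a prefix of length m >= lam l the letter x_j is
   p applied to the inverse of x_(mirror l i j), for some shift i.  Inside that prefix there is
   a window of H ~ l / (3 dd) positions, dd >= 1 / lam, no two of which are mirrors of each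
   other, so the window is determined by the letters outside it: for each of the (l + 1)^2
   choices of shift and window start, at most 4 (2k - 1)^(l - H) reduced words qualify.  This
   is exponentially smaller than the (2k - 1)^(l - 1) or more cyclically reduced words. *)

Fixpoint words k (n : nat) : seq (word k) :=
  if n is n'.+1 then [seq a :: w | a <- enum (letter k), w <- words k n']
  else [:: [::]].

Lemma mem_words k n (w : word k) : (w \in words k n) = (size w == n).
Proof.
elim: n w => [|n IH] [|a w] //=; first by apply/allpairsP => -[[b v] /= [_ _]].
apply/allpairsP/idP => [[[b v] /= [_]]|sw].
  by rewrite IH => /eqP <- [_ ->].
by exists (a, w); rewrite /= mem_enum IH.
Qed.

Lemma uniq_words k n : uniq (words k n).
Proof.
elim: n => [|n IH] //=; apply: allpairs_uniq => //; first exact: enum_uniq.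
by move=> [a w] [b v] _ _ /= [-> ->].
Qed.

Lemma count_words_succ k n (P : pred (word k)) :
  count P (words k n.+1) = \sum_(a : letter k) count (fun w => P (a :: w)) (words k n).
Proof.
rewrite /= /allpairs count_flatten sumnE big_map big_map big_enum /=.
by apply: eq_bigr => a _; rewrite count_map.
Qed.

Lemma card_tuples_count k n (P : pred (word k)) :
  #|[set t : n.-tuple (letter k) | P t]| = count P (words k n).
Proof.
rewrite cardsE cardE /enum_mem size_filter -(count_map val P) -enumT.
suff /seq.permP -> : perm_eq (map val (enum {: n.-tuple (letter k)})) (words k n) by [].
apply: uniq_perm; first by rewrite map_inj_uniq ?enum_uniq //; exact: val_inj.
  exact: uniq_words.
move=> w; rewrite mem_words; apply/mapP/idP => [[t _ ->]|/eqP sw].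
  by rewrite size_tuple.
by exists (Tuple (introT eqP sw)); rewrite ?mem_enum.
Qed.

Lemma rho_words k n (P : pred (word k)) :
  rho n P = (\sum_(l < n.+1) count P (words k l))%N.
Proof. by apply: eq_bigr => l _; rewrite card_tuples_count. Qed.

Lemma card_letter k : #|letter k| = (k * 2)%N.
Proof. by rewrite card_prod card_ord card_bool. Qed.

Lemma linv_neq k (a : letter k) : a != linv a.
Proof. by case: a => i [] /=; rewrite /linv xpair_eqE /= andbF. Qed.

Lemma freely_reduced_cons k (b : letter k) w :
  freely_reduced (b :: w) = (ohead w != Some (linv b)) && freely_reduced w.
Proof. by case: w. Qed.

Lemma freely_reduced_take k n (x : word k) : freely_reduced x -> freely_reduced (take n x).
Proof. by rewrite /freely_reduced -{1}(cat_take_drop n x) => /cat_sorted2 []. Qed.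

Lemma freely_reduced_drop k n (x : word k) : freely_reduced x -> freely_reduced (drop n x).
Proof. by rewrite /freely_reduced -{1}(cat_take_drop n x) => /cat_sorted2 []. Qed.

Lemma count_freely_reduced_avoiding k n (a : letter k) :
  count [pred w | freely_reduced w & ohead w != Some a] (words k n) = ((k * 2).-1 ^ n)%N.
Proof.
elim: n a => [|n IH] a //; rewrite count_words_succ (bigD1 a) //= eqxx.
rewrite (eq_count (a2 := pred0)) => [|w]; last by rewrite /= andbF.
rewrite count_pred0 add0n (eq_bigr (fun=> (k * 2).-1 ^ n)%N) => [|b ba].
  by rewrite sum_nat_const cardC1 card_letter expnS.
rewrite -(IH (linv b)); apply: eq_count => w /=.
by rewrite -[path _ _ _]/(freely_reduced (b :: w)) freely_reduced_cons ba andbT andbC.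
Qed.

Lemma count_freely_reduced_succ k n :
  count (@freely_reduced k) (words k n.+1) = (k * 2 * (k * 2).-1 ^ n)%N.
Proof.
rewrite count_words_succ (eq_bigr (fun=> (k * 2).-1 ^ n)%N) => [|b _].
  by rewrite sum_nat_const card_letter.
rewrite -(count_freely_reduced_avoiding n (linv b)); apply: eq_count => w.
by rewrite freely_reduced_cons andbC.
Qed.

Lemma count_freely_reduced_bounds k n :
  ((k * 2).-1 ^ n <= count (@freely_reduced k) (words k n) <= 2 * (k * 2).-1 ^ n)%N.
Proof.
case: n => [|n] //; rewrite count_freely_reduced_succ !expnS mulnA.
by rewrite !leq_mul2r; apply/andP; split; apply/orP; right; lia.
Qed.

Lemma count_le_inj (T1 T2 : eqType) (P1 : pred T1) (P2 : pred T2) s1 s2 (f : T1 -> T2) :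
  uniq s1 -> {in [seq x <- s1 | P1 x] &, injective f} ->
  (forall x, x \in s1 -> P1 x -> f x \in [seq y <- s2 | P2 y]) ->
  (count P1 s1 <= count P2 s2)%N.
Proof.
move=> u1 inj_f fP; rewrite -!size_filter -(size_map f).
apply: uniq_leq_size; first by rewrite map_inj_in_uniq // filter_uniq.
by move=> y /mapP [x]; rewrite mem_filter => /andP [P1x xs1] ->; apply: fP.
Qed.

Lemma count_le_sum_cover (T : eqType) (I : finType) (P : pred T) (Q : I -> pred T) s :
  (forall x, x \in s -> P x -> exists i, Q i x) -> (count P s <= \sum_i count (Q i) s)%N.
Proof.
elim: s => [|x s IH] cover /=; first by rewrite big1.
rewrite big_split /= leq_add ?IH //; last by move=> y ys; apply: cover; rewrite inE ys orbT.
have [Px|] := boolP (P x) => //=; have [i Qix] := cover x (mem_head _ _) Px.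
by rewrite (bigD1 i) //= Qix.
Qed.

Definition avoiding_letter k (u v : letter k) : letter k :=
  odflt u [pick z | (z != u) && (z != v)].

Lemma avoiding_letterP k (u v : letter k) : (1 < k)%N ->
  (avoiding_letter u v != u) && (avoiding_letter u v != v).
Proof.
move=> k1; rewrite /avoiding_letter; case: pickP => [z -> //|none].
have : (#|letter k| <= #|[set u; v]|)%N.
  apply/subset_leq_card/subsetP => z _; move: (none z).
  by rewrite !inE; case: eqP; case: eqP.
by rewrite card_letter cards2; case: (u != v) => /=; lia.
Qed.

Lemma cyc_reduced_rcons k (w : word k) u z : freely_reduced w ->
  z != linv (last u w) -> z != linv (head u w) -> cyc_reduced (rcons w z).
Proof.
case: w => [|a w] fr_w z_last z_head; rewrite /cyc_reduced /=; first exact: linv_neq.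
by rewrite last_rcons z_head andbT /freely_reduced /= rcons_path; apply/andP.
Qed.

Lemma count_cyc_reduced_lower k n : (1 < k)%N ->
  ((k * 2).-1 ^ n <= (k * 2).-1 * count (@cyc_reduced k) (words k n))%N.
Proof.
case: n => [|n] k1; first by rewrite /= /cyc_reduced /=; lia.
rewrite expnS leq_mul2l; apply/orP; right.
have [fr_lower _] := andP (count_freely_reduced_bounds k n).
apply: leq_trans fr_lower _.
pose u : letter k := (Ordinal (ltnW k1), false).
pose ext w := rcons w (avoiding_letter (linv (last u w)) (linv (head u w))).
apply: (count_le_inj (f := ext)); first exact: uniq_words.
  by move=> w v _ _ /rcons_inj [].
move=> w; rewrite mem_words mem_filter mem_words size_rcons => /eqP -> fr_w.
have /andP [z_last z_head] := avoiding_letterP (linv (last u w)) (linv (head u w)) k1.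
by rewrite eqxx andbT (cyc_reduced_rcons fr_w z_last z_head).
Qed.

Lemma rho_cyc_reduced_gt0 k n : (0 < rho n (@cyc_reduced k))%N.
Proof. by rewrite rho_words (bigD1 ord0). Qed.

Lemma rho_cyc_reduced_lower k n : (1 < k)%N ->
  ((k * 2).-1 ^ n <= (k * 2).-1 * rho n (@cyc_reduced k))%N.
Proof.
move=> k1; apply: leq_trans (count_cyc_reduced_lower n k1) _.
by rewrite leq_mul2l rho_words (bigD1 ord_max) //= leq_addr orbT.
Qed.

Lemma nth_rot (T : Type) (x0 : T) n (s : seq T) j :
  (n <= size s)%N -> (j < size s)%N -> nth x0 (rot n s) j = nth x0 s ((j + n) %% size s).
Proof.
move=> ns js; rewrite /rot nth_cat size_drop; case: ifP => jn.
  by rewrite nth_drop modn_small; [rewrite addnC|lia].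
have -> : ((j + n) %% size s = j - (size s - n))%N.
  by rewrite (_ : j + n = j - (size s - n) + size s)%N ?modnDr ?modn_small; lia.
by rewrite nth_take //; lia.
Qed.

(* For l = size x, the letter at position j of rot i (apply_relab p (winv x)) is
   p (linv x_(mirror l i j)). *)
Definition mirror l i j := (l - ((j + i) %% l).+1)%N.

Lemma mirror_lt l i j : (0 < l)%N -> (mirror l i j < l)%N.
Proof. by rewrite /mirror; lia. Qed.

Lemma dvdn_mirror l i j : (0 < l)%N -> (l %| i + j + mirror l i j + 1)%N.
Proof.
move=> l0; rewrite /mirror.
have := ltn_pmod (j + i) l0; have := divn_eq (j + i) l.
move: ((j + i) %% l)%N ((j + i) %/ l)%N => r q E rl.
by rewrite (_ : i + j + (l - r.+1) + 1 = q.+1 * l)%N ?dvdn_mull //; lia.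
Qed.

Lemma nth_mirror_of_prefix k (p : {perm letter k}) (x : word k) d i m j :
  (i <= size x)%N -> (j < m)%N -> (j < size x)%N ->
  take m x = take m (rot i (apply_relab p (winv x))) ->
  nth d x j = p (linv (nth d x (mirror (size x) i j))).
Proof.
move=> il jm jl prefix_eq.
have size_img : size (apply_relab p (winv x)) = size x.
  by rewrite size_map size_rev size_map.
rewrite -(nth_take d jm x) prefix_eq nth_take // nth_rot ?size_img //.
have jil : ((j + i) %% size x < size x)%N by rewrite ltn_pmod //; lia.
by rewrite (nth_map d) ?nth_rev ?size_rev ?size_map // (nth_map d) //; lia.
Qed.

(* Positions j and j' are mirrors of each other iff l %| i + j + j' + 1 (dvdn_mirror); no two
   positions of the window [a, a + H) are. *)
Definition free_window l i a H :=
  [forall t : 'I_H, forall t' : 'I_H, ~~ (l %| i + (a + t) + (a + t') + 1)%N].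

Lemma free_window_exists l i H :
  (6 * H <= l)%N -> exists2 a, (a <= 2 * H)%N & free_window l i a H.
Proof.
move=> Hl.
have [/existsP [j0 /existsP [j1 dvd_l]]|none] :=
  boolP [exists j0 : 'I_H, exists j1 : 'I_H, l %| i + j0 + j1 + 1]%N; last first.
  exists 0%N => //; apply/forallP => t; apply/forallP => t'.
  by have := existsPn (existsPn none t) t'; rewrite !add0n.
(* Past the mirror pair j0, j1 all the sums exceed a multiple of l by less than l. *)
exists (j0 + j1 + 1)%N; first by have := ltn_ord j0; have := ltn_ord j1; lia.
apply/forallP => t; apply/forallP => t'.
rewrite (_ : i + _ + _ + 1 = (i + j0 + j1 + 1) + (j0 + j1 + 2 + t + t'))%N; last by lia.
rewrite dvdn_addr //; apply/negP => /dvdn_leq.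
by have := ltn_ord j0; have := ltn_ord j1; have := ltn_ord t; have := ltn_ord t'; lia.
Qed.

Section MirrorConstrained.
Variables (k : nat) (p : {perm letter k}) (d : letter k).

Definition mirror_constrained l H i a : pred (word k) := fun x =>
  [&& size x == l, freely_reduced x &
   [forall t : 'I_H, nth d x (a + t) == p (linv (nth d x (mirror l i (a + t))))]].

Lemma mirror_constrained_inj l H i a (x x' : word k) :
  (a + H <= l)%N -> free_window l i a H ->
  mirror_constrained l H i a x -> mirror_constrained l H i a x' ->
  take a x = take a x' -> drop (a + H) x = drop (a + H) x' -> x = x'.
Proof.
move=> aHl free /and3P [/eqP sx _ cx] /and3P [/eqP sx' _ cx'] eq_take eq_drop.
have outside q : (q < a)%N || (a + H <= q)%N -> nth d x q = nth d x' q.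
  case/orP => [qa|qa]; first by rewrite -(nth_take d qa x) eq_take nth_take.
  by rewrite (_ : q = a + H + (q - (a + H)))%N -?nth_drop ?eq_drop //; lia.
apply: (eq_from_nth (x0 := d)) => [|q]; first by rewrite sx sx'.
rewrite sx => ql; have [/outside //|] := boolP ((q < a) || (a + H <= q))%N.
rewrite negb_or -leqNgt -ltnNge => /andP [aq qaH].
have tH : (q - a < H)%N by lia.
rewrite (_ : q = a + Ordinal tH)%N /=; last by lia.
rewrite (eqP (forallP cx (Ordinal tH))) (eqP (forallP cx' (Ordinal tH))).
have l0 : (0 < l)%N by lia.
have := dvdn_mirror i (a + Ordinal tH) l0; have := mirror_lt i (a + Ordinal tH) l0.
move: (mirror l i _) => z zl dvd_l; congr (p (linv _)); apply: outside.
apply/negPn/negP; rewrite negb_or -leqNgt -ltnNge => /andP [az zaH].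
have t'H : (z - a < H)%N by lia.
have := forallP (forallP free (Ordinal tH)) (Ordinal t'H).
by rewrite /= (_ : a + (z - a) = z)%N ?dvd_l //; lia.
Qed.

Lemma count_mirror_constrained l H i a : (a + H <= l)%N -> free_window l i a H ->
  (count (mirror_constrained l H i a) (words k l) <= 4 * (k * 2).-1 ^ (l - H))%N.
Proof.
move=> aHl free.
pose pieces := [seq (u, v) | u <- [seq u <- words k a | freely_reduced u],
                             v <- [seq v <- words k (l - (a + H)) | freely_reduced v]].
apply: (@leq_trans (count predT pieces)).
  apply: (count_le_inj (f := fun x => (take a x, drop (a + H) x))); first exact: uniq_words.
    move=> x x'; rewrite !mem_filter => /andP [cx _] /andP [cx' _] [].
    exact: mirror_constrained_inj cx cx'.
  move=> x _ /and3P [/eqP sx fr_x _]; rewrite mem_filter /=.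
  apply/allpairsP; exists (take a x, drop (a + H) x); split => //.
    by rewrite mem_filter mem_words size_takel ?sx ?eqxx ?andbT; [exact: freely_reduced_take|lia].
  by rewrite mem_filter mem_words size_drop sx eqxx andbT; exact: freely_reduced_drop.
rewrite count_predT size_allpairs !size_filter.
rewrite (_ : l - H = a + (l - (a + H)))%N ?expnD; last by lia.
have [_ ua] := andP (count_freely_reduced_bounds k a).
have [_ uv] := andP (count_freely_reduced_bounds k (l - (a + H))).
by apply: leq_trans (leq_mul ua uv) _; rewrite mulnACA.
Qed.

End MirrorConstrained.

(* With D = 3 dd and dd >= 1 / lam, the matched prefix has length m >= 3 H, which leaves room
   for the window of free_window_exists. *)
Definition window_len D l := ((l - D) %/ D)%N.

Lemma window_len_le D l : (window_len D l <= l)%N.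
Proof. exact: leq_trans (leq_div _ _) (leq_subr _ _). Qed.

Lemma le_window_len D l : (0 < D)%N -> (l <= D * (window_len D l + 2))%N.
Proof.
move=> D0; have := divn_eq (l - D) D; have := ltn_pmod (l - D) D0.
rewrite /window_len; move: ((l - D) %/ D)%N ((l - D) %% D)%N => q r; nia.
Qed.

Local Open Scope ring_scope.

Lemma Sprime_window k (lam : R) (p : {perm letter k}) (d : letter k) dd l (x : word k) :
  (2 <= dd)%N -> 1 <= dd%:R * lam -> size x = l -> Sprime lam p x ->
  exists i a, [/\ (i <= l)%N, (a + window_len (3 * dd) l <= l)%N,
                  free_window l i a (window_len (3 * dd) l) &
                  mirror_constrained p d l (window_len (3 * dd) l) i a x].
Proof.
move=> dd2 dd_lam sx /andP [cr_x /existsP [i /existsP [m /andP [lam_m /eqP prefix_eq]]]].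
set H := window_len (3 * dd) l.
have l_dd_m : (l <= dd * m)%N.
  rewrite -(ler_nat R) natrM -sx; apply: le_trans (_ : dd%:R * lam * (size x)%:R <= _).
    by rewrite ler_peMl.
  by rewrite -mulrA ler_wpM2l.
have H_dd : (H * (3 * dd) <= l - 3 * dd)%N by exact: leq_divM.
have [|a a2H free] := @free_window_exists l i H; first by nia.
exists i, a; split => //; [by rewrite -ltnS -sx|nia|].
apply/and3P; split; [by rewrite sx|by case/andP: cr_x|].
apply/forallP => t; apply/eqP; rewrite -sx.
apply: (nth_mirror_of_prefix d _ _ _ prefix_eq).
- by rewrite -ltnS.
- by have := ltn_ord t; nia.
- by have := ltn_ord t; rewrite sx; nia.
Qed.

Lemma count_Sprime k (lam : R) (p : {perm letter k}) dd l :
  (0 < k)%N -> (2 <= dd)%N -> 1 <= dd%:R * lam ->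
  (count (Sprime lam p) (words k l) <=
   l.+1 * l.+1 * (4 * (k * 2).-1 ^ (l - window_len (3 * dd) l)))%N.
Proof.
move=> k0 dd2 dd_lam; pose d : letter k := (Ordinal k0, false).
set H := window_len (3 * dd) l.
pose Q (ia : 'I_l.+1 * 'I_l.+1) := [pred x | [&& ia.2 + H <= l, free_window l ia.1 ia.2 H &
                                          mirror_constrained p d l H ia.1 ia.2 x]]%N.
apply: (leq_trans (count_le_sum_cover (Q := Q) _)).
  move=> x; rewrite mem_words => /eqP sx /(Sprime_window d dd2 dd_lam sx).
  move=> [i [a [il aHl free cx]]]; have al : (a < l.+1)%N by lia.
  by exists (Ordinal (il : (i < l.+1)%N), Ordinal al); apply/and3P.
apply: (@leq_trans (\sum_(ia : 'I_l.+1 * 'I_l.+1) 4 * (k * 2).-1 ^ (l - H))%N); last first.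
  by rewrite sum_nat_const card_prod card_ord.
apply: leq_sum => -[i a] _ /=.
have [/andP [aHl free]|bad] := boolP ((a + H <= l)%N && free_window l i a H).
  apply: leq_trans (count_mirror_constrained p d aHl free).
  by apply: sub_count => x /and3P [].
rewrite (eq_count (a2 := pred0)) ?count_pred0 // => x /=.
by rewrite andbA (negbTE bad).
Qed.

Lemma ler_bernoulli (F : realFieldType) (x : F) n : -1 <= x -> 1 + n%:R * x <= (1 + x) ^+ n.
Proof.
move=> x_ge; elim: n => [|n IH]; first by rewrite mul0r addr0 expr0.
rewrite exprS -natr1; apply: le_trans (_ : (1 + x) * (1 + n%:R * x) <= _).
  have : 0 <= n%:R * x ^+ 2 :> F by rewrite mulr_ge0 ?sqr_ge0.
  by rewrite expr2; nra.
by rewrite ler_wpM2l //; lra.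
Qed.

Lemma one_add_inv_double_bounds (F : realFieldType) D : (0 < D)%N ->
  let th : F := 1 + (2 * D%:R)^-1 in [/\ 1 < th, th <= 2 & th ^+ D <= 2].
Proof.
move=> D0 th; set e := (2 * D%:R)^-1 in th *.
have D1 : 1 <= D%:R :> F by rewrite ler1n.
have De : D%:R * e = 2^-1 by rewrite /e invfM mulrCA mulfV ?mulr1 //; lra.
have e_gt0 : 0 < e by rewrite invr_gt0; lra.
have e_le : e <= 2^-1 by rewrite -De; nra.
rewrite /th; split; [lra|lra|].
(* (1 + e)^D <= 1 / (1 - e)^D, and Bernoulli gives (1 - e)^D >= 1 - D e = 1/2. *)
have lower : 2^-1 <= (1 - e) ^+ D.
  by have := ler_bernoulli D (_ : -1 <= - e); rewrite mulrN De; lra.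
have prod_le1 : (1 + e) ^+ D * (1 - e) ^+ D <= 1.
  by rewrite -exprMn; apply: exprn_ile1; nra.
have : 0 <= (1 + e) ^+ D by rewrite exprn_ge0 //; lra.
nra.
Qed.

Lemma poly_le_geometric (F : realFieldType) (th : F) : 1 < th -> th <= 2 ->
  exists c sigma, [/\ 0 < c, 0 < sigma < 1 &
                      forall n, n.+1%:R ^+ 3 <= c * sigma ^+ n * th ^+ n].
Proof.
move=> th_gt1 th_le2; set e := (th - 1) / 8.
have e_gt0 : 0 < e by rewrite /e; lra.
have e3_gt0 : 0 < e ^+ 3 by rewrite exprn_gt0.
set beta := (1 + e) ^+ 3.
have beta_gt0 : 0 < beta by rewrite exprn_gt0 //; lra.
have beta_lt : beta < th.
  have th_e : th = 1 + 8 * e by rewrite /e; field.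
  have e2 : e * e <= e by nra.
  have e3 : e * e * e <= e by nra.
  by rewrite th_e /beta !exprS expr0 mulr1; nra.
exists (e^-3 * beta), (beta / th); split.
- by rewrite mulr_gt0 // invr_gt0.
- by rewrite divr_gt0 ?ltr_pdivrMr ?mul1r //=; lra.
have th_neq0 : th != 0 by rewrite gt_eqF //; lra.
move=> n; rewrite -mulrA -exprMn divfK // -mulrA -exprS.
rewrite -exprM mulnC exprM mulrC ler_pdivlMr // -exprMn.
have bern : n.+1%:R * e <= (1 + e) ^+ n.+1.
  by have := ler_bernoulli n.+1 (_ : -1 <= e); lra.
by rewrite lerXn2r // nnegrE ?mulr_ge0 ?exprn_ge0 //; lra.
Qed.

Lemma expr_window_le (F : realFieldType) (K th : F) D l H n :
  1 <= th -> th <= K -> th ^+ D <= K ->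
  (l <= n)%N -> (l <= D * (H + 2))%N -> (H <= l)%N ->
  K ^+ (l - H) * th ^+ n <= K ^+ (n + 2).
Proof.
move=> th_ge1 th_le th_D ln lD Hl.
have th_ge0 : 0 <= th by lra.
have K_ge0 : 0 <= K by lra.
have head : th ^+ l <= K ^+ (H + 2).
  apply: le_trans (ler_weXn2l th_ge1 lD) _.
  by rewrite exprM lerXn2r // nnegrE exprn_ge0.
have tail : th ^+ (n - l) <= K ^+ (n - l) by rewrite lerXn2r.
have -> : K ^+ (n + 2) = K ^+ (l - H) * (K ^+ (H + 2) * K ^+ (n - l)).
  by rewrite -!exprD; congr (K ^+ _); lia.
rewrite -(subnKC ln) exprD addKn ler_wpM2l ?exprn_ge0 //.
by rewrite ler_pM ?exprn_ge0.
Qed.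

Lemma rho_Sprime_le k (lam : R) (p : {perm letter k}) dd (th : R) n :
  (0 < k)%N -> (2 <= dd)%N -> 1 <= dd%:R * lam ->
  1 <= th -> th <= (k * 2).-1%:R -> th ^+ (3 * dd) <= (k * 2).-1%:R ->
  (rho n (Sprime lam p))%:R * th ^+ n <= 4 * n.+1%:R ^+ 3 * (k * 2).-1%:R ^+ (n + 2).
Proof.
move=> k0 dd2 dd_lam th_ge1 th_le th_D.
set K := (k * 2).-1; rewrite rho_words natr_sum mulr_suml.
apply: le_trans (_ : \sum_(l < n.+1) 4 * n.+1%:R ^+ 2 * K%:R ^+ (n + 2) <= _); last first.
  rewrite sumr_const card_ord -[_ *+ _]mulr_natr le_eqVlt; apply/orP; left; apply/eqP; ring.
apply: ler_sum => l _; set H := window_len (3 * dd) l.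
apply: le_trans (_ : (l.+1 * l.+1 * 4)%:R * (K%:R ^+ (l - H) * th ^+ n) <= _).
  rewrite mulrA -natrX -!natrM; apply: ler_wpM2r; first by rewrite exprn_ge0 //; lra.
  by rewrite ler_nat -mulnA count_Sprime.
rewrite ler_pM ?mulr_ge0 ?exprn_ge0 //; try lra.
  by rewrite -natrX -natrM ler_nat; have := ltn_ord l; nia.
apply: (expr_window_le th_ge1 th_le th_D) (window_len_le _ _).
- by rewrite -ltnS.
- by apply: le_window_len; lia.
Qed.

Lemma rho_Sprime_le_geometric k (lam : R) (p : {perm letter k}) dd (th c sigma : R) n :
  (1 < k)%N -> (2 <= dd)%N -> 1 <= dd%:R * lam ->
  1 < th -> th <= (k * 2).-1%:R -> th ^+ (3 * dd) <= (k * 2).-1%:R ->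
  n.+1%:R ^+ 3 <= c * sigma ^+ n * th ^+ n ->
  (rho n (Sprime lam p))%:R <=
    4 * c * (k * 2).-1%:R ^+ 3 * sigma ^+ n * (rho n (@cyc_reduced k))%:R.
Proof.
move=> k1 dd2 dd_lam th_gt1 th_le th_D poly.
set K := (k * 2).-1; set T := rho n (@cyc_reduced k).
have KT : K%:R ^+ n <= K%:R * T%:R :> R.
  by rewrite -natrX -natrM ler_nat rho_cyc_reduced_lower.
rewrite -(ler_pM2r (exprn_gt0 n (_ : 0 < th))); last lra.
apply: le_trans (rho_Sprime_le p n (ltnW k1) dd2 dd_lam (ltW th_gt1) th_le th_D) _.
have c_th_ge0 : 0 <= 4 * (c * sigma ^+ n * th ^+ n).
  by rewrite mulr_ge0 // (le_trans _ poly) ?exprn_ge0.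
apply: le_trans (_ : 4 * (c * sigma ^+ n * th ^+ n) * K%:R ^+ (n + 2) <= _).
  by apply: ler_wpM2r; rewrite ?exprn_ge0 // ler_wpM2l.
apply: le_trans (_ : 4 * (c * sigma ^+ n * th ^+ n) * (K%:R ^+ 2 * (K%:R * T%:R)) <= _).
  by apply: ler_wpM2l => //; rewrite addnC exprD; apply: ler_wpM2l; rewrite ?exprn_ge0.
by rewrite le_eqVlt; apply/orP; left; apply/eqP; ring.
Qed.

Lemma exp_negligible_of_bound k (S Q : pred (word k)) (C sigma : R) :
  0 < C -> 0 < sigma < 1 -> (forall x, S x -> Q x) -> (forall n, 0 < rho n Q)%N ->
  (forall n, (rho n S)%:R <= C * sigma ^+ n * (rho n Q)%:R) -> exp_negligible S Q.
Proof.
move=> C_gt0 sigma01 SQ Q_gt0 bound; exists C, sigma; split; [done|split; [done|move=> n]].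
have rho_split : rho n Q = (rho n [pred x | Q x && ~~ S x] + rho n S)%N.
  rewrite !rho_words -big_split; apply: eq_bigr => l _.
  elim: (words k l) => //= x s ->; have := SQ x.
  by case: (S x); case: (Q x) => //= /(_ isT); lia.
have T_gt0 : 0 < (rho n Q)%:R :> R by rewrite ltr0n.
have -> : (rho n [pred x | Q x && ~~ S x])%:R / (rho n Q)%:R - 1 =
          - ((rho n S)%:R / (rho n Q)%:R) :> R.
  by rewrite rho_split natrD; field; rewrite -natrD -rho_split gt_eqF.
by rewrite normrN ger0_norm ?divr_ge0 // ler_pdivrMr.
Qed.

Lemma exists_nat_mul_ge1 (F : archiRealFieldType) (x : F) : 0 < x ->
  exists2 d, (2 <= d)%N & 1 <= d%:R * x.
Proof.
move=> x_gt0; exists (maxn 2 (Num.bound x^-1)); first exact: leq_maxl.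
have x_inv_lt : x^-1 < (Num.bound x^-1)%:R by rewrite archi_boundP // invr_ge0 ltW.
rewrite -ler_pdivrMr // mul1r; apply: (le_trans (ltW x_inv_lt)).
by rewrite ler_nat leq_maxr.
Qed.

Theorem lemma4p6 (k : nat) (lam : R) (p : {perm letter k}) :
  (1 < k)%N -> 0 < lam -> lam < 3^-1 ->
  relabeling p -> p != 1%g ->
  exp_negligible (Sprime lam p) (@cyc_reduced k).
Proof.
move=> k1 lam_gt0 _ _ _.
have [dd dd2 dd_lam] := exists_nat_mul_ge1 lam_gt0.
set K := (k * 2).-1; have K_ge3 : 3 <= K%:R :> R by rewrite ler_nat /K; lia.
(* th ^+ (3 dd) <= 2 <= 2k - 1, so th ^+ n absorbs the saving (2k - 1)^(-H) of count_Sprime. *)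
have D_gt0 : (0 < 3 * dd)%N by lia.
have [th_gt1 th_le2 th_D] := one_add_inv_double_bounds R D_gt0.
set th := 1 + _ in th_gt1 th_le2 th_D.
have [c [sigma [c_gt0 sigma01 poly]]] := poly_le_geometric th_gt1 th_le2.
apply: (exp_negligible_of_bound (C := 4 * c * K%:R ^+ 3) (sigma := sigma)).
- by rewrite !mulr_gt0 ?exprn_gt0 //; lra.
- exact: sigma01.
- by move=> x /andP [].
- exact: rho_cyc_reduced_gt0.
by move=> n; apply: rho_Sprime_le_geometric dd2 dd_lam th_gt1 _ _ (poly n); rewrite // -/K; lra.
Qed.
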